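(* Every cancellative monoid that is left-amenable or right-amenable is sofic.
   Context: A monoid $M$ is cancellative if $st=st'$ implies $t=t'$ and $ts=t's$ implies $t=t'$. $M$ is left-amenable (resp. right-amenable) if there is a mean on $\ell^\infty(M)$ (a positive linear functional of norm one taking value $1$ on the constant function $1$) invariant under all left translations (resp. all right translations) by elements of $M$. For a non-empty finite set $X$, $\mathrm{Map}(X)$ is the monoid of all maps $X\to X$ under composition (identity $\mathrm{Id}_X$) with the Hamming metric $d_X(f,g)=|\{x\in X : f(x)\ne g(x)\}|/|X|$. For finite $K\subset M$ and $\varepsilon,\alpha>0$, a map $\varphi\colon M\to\mathrm{Map}(X)$ is a $(K,\varepsilon)$-morphism if $d_X(\varphi(k_1k_2),\varphi(k_1)\varphi(k_2))\le\varepsilon$ for all $k_1,k_2\in K$ and $d_X(\varphi(1_M),\mathrm{Id}_X)\le\varepsilon$; it is $(K,\alpha)$-injective if $d_X(\varphi(k_1),\varphi(k_2))\ge\alpha$ for all distinct $k_1,k_2\in K$. $M$ is sofic if for every finite $K\subset M$ and every $\varepsilon>0$ there exist a non-empty finite set $X$ and a $(K,1-\varepsilon)$-injective $(K,\varepsilon)$-morphism $\varphi\colon M\to\mathrm{Map}(X)$. *)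

From mathcomp Require Import all_boot.
From Stdlib Require Import Reals List.
Set Implicit Arguments. Unset Strict Implicit.
Open Scope R_scope.

Section Defs.
Variable M : Type.
Variable op : M -> M -> M.
Variable e : M.

Definition is_monoid : Prop :=
  (forall a b c, op a (op b c) = op (op a b) c) /\
  (forall a, op e a = a) /\ (forall a, op a e = a).

Definition cancellative : Prop :=
  (forall s t t', op s t = op s t' -> t = t') /\
  (forall s t t', op t s = op t' s -> t = t').

Definition bounded (f : M -> R) : Prop := exists C, forall x, Rabs (f x) <= C.

(* a mean on l^oo(M): m is only constrained on bounded functions *)
Definition is_mean (m : (M -> R) -> R) : Prop :=
  (forall f g, bounded f -> bounded g -> m (fun x => f x + g x) = m f + m g) /\
  (forall (a : R) f, bounded f -> m (fun x => a * f x) = a * m f) /\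
  (forall f, bounded f -> (forall x, 0 <= f x) -> 0 <= m f) /\
  (* operator norm <= 1 w.r.t. the sup norm (= 1 together with m 1 = 1) *)
  (forall f C, (forall x, Rabs (f x) <= C) -> Rabs (m f) <= C) /\
  m (fun _ => 1) = 1.

Definition left_amenable : Prop :=
  exists m, is_mean m /\
    forall s f, bounded f -> m (fun x => f (op s x)) = m f.

Definition right_amenable : Prop :=
  exists m, is_mean m /\
    forall s f, bounded f -> m (fun x => f (op x s)) = m f.

Definition hamming (X : finType) (f g : X -> X) : R :=
  INR #|[pred x | f x != g x]| / INR #|X|.

Definition is_K_eps_morphism (X : finType) (K : list M) (eps : R)
    (phi : M -> X -> X) : Prop :=
  (forall k1 k2, In k1 K -> In k2 K ->
     hamming (phi (op k1 k2)) (fun x => phi k1 (phi k2 x)) <= eps) /\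
  hamming (phi e) (fun x => x) <= eps.

Definition is_K_alpha_injective (X : finType) (K : list M) (alpha : R)
    (phi : M -> X -> X) : Prop :=
  forall k1 k2, In k1 K -> In k2 K -> k1 <> k2 -> alpha <= hamming (phi k1) (phi k2).

Definition sofic : Prop :=
  forall (K : list M) (eps : R), 0 < eps ->
    exists (X : finType), #|X| != 0%nat /\
      exists phi : M -> X -> X,
        is_K_alpha_injective K (1 - eps) phi /\ is_K_eps_morphism K eps phi.
End Defs.

From Pilot Require Import Defs.
From Stdlib Require Import Reals Lra.
From mathcomp Require Import all_boot boolp classical_sets filter.

(* If M is left-amenable and cancellative, it satisfies the Følner condition.  Otherwise
   some finite S has |S P| >= 2 |P| for every finite P (take a power of K ∪ {1} for a K
   witnessing the failure).  Hall's marriage theorem then matches every point of P, taken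
   twice, to distinct elements of S P, and a compactness argument with an ultrafilter glues
   these matchings into two injective "S-translations" of M with disjoint images.  Left
   invariance and cancellativity give each translated piece the mass of its preimage, so
   the invariant mean would have total mass 2.

   A Følner set F for {1} ∪ K ∪ K K of ratio eps/2 is a sofic approximation: k acts on F
   by x ↦ k x where this stays in F, and on all but eps/2 of the points this action is
   unital, injective in k (right cancellation) and multiplicative.  A right-amenable monoid
   is treated through its opposite: there k acts by the partial inverse of x ↦ x k, which
   reverses the order of composition once more. *)

Set Implicit Arguments. Unset Strict Implicit. Unset Printing Implicit Defensive.
Local Open Scope nat_scope.

Section HallMarriage.
Variables (X Y : eqType) (y0 : Y).
Implicit Types (N : X -> seq Y) (A B l : seq X).

Definition nbhd N A : seq Y := undup (flatten (map N A)).

Lemma mem_nbhd N A y : (y \in nbhd N A) = has (fun x => y \in N x) A.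
Proof. by rewrite mem_undup; apply/flatten_mapP/hasP => -[x xA yx]; exists x. Qed.

Definition hall_condition N l :=
  forall A, uniq A -> {subset A <= l} -> size A <= size (nbhd N A).

Definition has_matching N l :=
  exists f : X -> Y, {in l &, injective f} /\ {in l, forall x, f x \in N x}.

Lemma has_matching_nil N : has_matching N [::].
Proof. by exists (fun _ => y0). Qed.

Section Critical.
Variables (N : X -> seq Y) (l A : seq X).
Let N' x := [seq y <- N x | y \notin nbhd N A].
Let l' := [seq x <- l | x \notin A].

(* A critical set [A] (one with [|N(A)| = |A|]) splits the problem in two. *)
Lemma hall_condition_contract : uniq A -> {subset A <= l} ->
  size (nbhd N A) = size A -> hall_condition N l -> hall_condition N' l'.
Proof.
move=> uA sAl crit hall B uB sBl'.
have uAB : uniq (A ++ B).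
  rewrite cat_uniq uA uB andbT; apply/hasP => -[x /sBl'].
  by rewrite mem_filter => /andP [/negPf ->].
have sABl : {subset A ++ B <= l}.
  by move=> x; rewrite mem_cat => /orP [/sAl //| /sBl']; rewrite mem_filter => /andP [].
have sN : size (nbhd N (A ++ B)) <= size (nbhd N A ++ nbhd N' B).
  apply: uniq_leq_size; first exact: undup_uniq.
  move=> y; rewrite mem_nbhd has_cat mem_cat => /orP [hA|/hasP [x xB yx]].
    by rewrite mem_nbhd hA.
  case yA: (y \in nbhd N A) => //=.
  by rewrite mem_nbhd; apply/hasP; exists x => //; rewrite mem_filter yA.
have := leq_trans (hall _ uAB sABl) sN.
by rewrite !size_cat crit leq_add2l.
Qed.

Lemma has_matching_glue : has_matching N A -> has_matching N' l' -> has_matching N l.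
Proof.
move=> [f1 [inj1 in1]] [f2 [inj2 in2]].
have f2N x : x \in l -> x \notin A -> f2 x \in N x /\ f2 x \notin nbhd N A.
  move=> xl xA; have : f2 x \in N' x by apply: in2; rewrite mem_filter xA.
  by rewrite mem_filter => /andP [].
have f1N x : x \in A -> f1 x \in nbhd N A.
  by move=> xA; rewrite mem_nbhd; apply/hasP; exists x => //; apply: in1.
exists (fun x => if x \in A then f1 x else f2 x); split.
- move=> x x' xl x'l; case xA: (x \in A); case x'A: (x' \in A).
  + exact: inj1.
  + by have [_ /negP] := f2N _ x'l (negbT x'A) => + fx; rewrite -fx f1N.
  + by have [_ /negP] := f2N _ xl (negbT xA) => + fx; rewrite fx f1N.
  + by apply: inj2; rewrite mem_filter ?xA ?x'A.
- move=> x xl; case xA: (x \in A); first exact: in1.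
  by have [] := f2N _ xl (negbT xA).
Qed.
End Critical.

Section Noncritical.
Variables (N : X -> seq Y) (x : X) (l : seq X) (y : Y).
Let N' z := [seq w <- N z | w != y].

Lemma hall_condition_delete :
  (forall B, uniq B -> {subset B <= l} -> B != [::] -> size B < size (nbhd N B)) ->
  hall_condition N' l.
Proof.
move=> surplus [|b B] uB sBl //.
have sN : size (nbhd N (b :: B)) <= size (y :: nbhd N' (b :: B)).
  apply: uniq_leq_size; first exact: undup_uniq.
  move=> w; rewrite mem_nbhd inE => /hasP [z zB wz].
  case wy: (w == y) => //=; rewrite mem_nbhd; apply/hasP; exists z => //.
  by rewrite mem_filter wy.
by rewrite -ltnS; apply: leq_trans (surplus _ uB sBl isT) sN.
Qed.

Lemma has_matching_cons : y \in N x -> has_matching N' l -> has_matching N (x :: l).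
Proof.
move=> yx [f [finj fN']].
have fN z : z \in l -> f z \in N z /\ f z != y.
  by move=> zl; have := fN' z zl; rewrite mem_filter => /andP [].
exists (fun z => if z == x then y else f z); split.
- move=> z z'; rewrite !inE.
  case: (eqVneq z x) => [->|zx]; case: (eqVneq z' x) => [->|z'x] //= zl z'l.
  + by move=> fyz; have [_] := fN _ z'l; rewrite -fyz eqxx.
  + by move=> fzy; have [_] := fN _ zl; rewrite fzy eqxx.
  + exact: finj.
- move=> z; rewrite inE; case: (eqVneq z x) => [-> //|_] /= zl.
  by have [] := fN _ zl.
Qed.
End Noncritical.

Lemma hall_marriage N l : uniq l -> hall_condition N l -> has_matching N l.
Proof.
move: {2}(size l) (leqnn (size l)) => n; elim: n N l => [|n IH] N l.
  by rewrite leqn0 => /nilP -> _ _; apply: has_matching_nil.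
move=> sl ul hall.
case: (pselect (exists A, [/\ uniq A, {subset A <= l}, A != [::], size A < size l &
                               size (nbhd N A) = size A])).
- move=> [A [uA sAl A0 Al crit]].
  apply: (has_matching_glue (A := A)).
    apply: IH uA _; first by rewrite -ltnS; apply: leq_trans sl.
    by move=> B uB sBA; apply: hall => // x /sBA /sAl.
  apply: IH; last 2 first.
  + exact: filter_uniq.
  + exact: hall_condition_contract.
  rewrite -ltnS; apply: leq_trans sl.
  rewrite size_filter -(count_predC (mem A) l) addnC -addn1 leq_add2l.
  case: A A0 sAl {uA Al crit} => // a A _ sAl.
  by rewrite -has_count; apply/hasP; exists a; [exact: (sAl a (mem_head _ _)) | exact: mem_head].
- case: l sl ul hall => [|x l] sl ul hall nocrit; first exact: has_matching_nil.
  have : 1 <= size (nbhd N [:: x]).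
    by apply: (hall [:: x]) => // z; rewrite inE => /eqP ->; rewrite mem_head.
  case nbx: (nbhd N [:: x]) => [|y s] // _.
  apply: (has_matching_cons (y := y)).
    have : y \in nbhd N [:: x] by rewrite nbx mem_head.
    by rewrite mem_nbhd /= orbF.
  apply: IH; [exact: sl | by case/andP: ul|].
  apply: hall_condition_delete => B uB sBl B0.
  have sBxl : {subset B <= x :: l} by move=> z zB; rewrite inE sBl ?orbT.
  rewrite ltn_neqAle (hall B uB sBxl) andbT; apply/negP => /eqP crit.
  apply: nocrit; exists B; split => //.
  by rewrite ltnS; apply: uniq_leq_size.
Qed.
End HallMarriage.

Section Compactness.
Local Open Scope classical_set_scope.

Lemma ultra_setU T (U : set_system T) (A B : set T) :
  UltraFilter U -> U (A `|` B) -> U A \/ U B.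
Proof.
move=> UU UAB; have UF : Filter U by apply: filter_filter.
have [|UnA] := in_ultra_setVsetC A UU; [by left | right].
by apply: filterS (filterI UAB UnA) => x [[Ax|Bx] nAx] //; case: nAx.
Qed.

Lemma ultra_fibre T (U : set_system T) (g : T -> nat) k :
  UltraFilter U -> U [set F | g F < k] -> exists2 i, i < k & U [set F | g F = i].
Proof.
move=> UU; have UF : Filter U by apply: filter_filter.
elim: k => [|k IH] Ulek.
  by exfalso; apply: (filter_not_empty U); apply: filterS Ulek.
have : U ([set F | g F < k] `|` [set F | g F = k]).
  apply: filterS Ulek => F /=; rewrite ltnS leq_eqVlt orbC.
  by case/orP => [-> | /eqP ->]; [left|right].
case/(ultra_setU UU) => [/IH [i ik Ui]|Uk]; last by exists k.
by exists i => //; apply: ltnW.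
Qed.

Variable X : eqType.

Definition supersets_filter : set_system (seq X) :=
  fun A => exists l0 : seq X, forall l, {subset l0 <= l} -> A l.

Lemma supersets_filter_proper : ProperFilter supersets_filter.
Proof.
split; first by move=> [l0 H]; apply: (H l0).
split.
- by exists [::].
- move=> A B [l1 H1] [l2 H2]; exists (l1 ++ l2) => l sl; split.
    by apply: H1 => y yl; apply: sl; rewrite mem_cat yl.
  by apply: H2 => y yl; apply: sl; rewrite mem_cat yl orbT.
- by move=> P Q PQ [l0 H]; exists l0 => l sl; apply: PQ; apply: H.
Qed.

(* An ultrafilter refining [supersets_filter] chooses, point by point, the colour that
   the local colourings of almost all finite sets agree on. *)
Lemma colouring_compactness (n : nat) (C : X -> X -> nat -> nat -> Prop) :
  (forall F : seq X, exists c : X -> nat, (forall x, x \in F -> c x < n) /\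
     (forall x x', x \in F -> x' \in F -> C x x' (c x) (c x'))) ->
  exists c : X -> nat, (forall x, c x < n) /\ (forall x x', C x x' (c x) (c x')).
Proof.
move=> local; have [U [UU supU]] := ultraFilterLemma supersets_filter_proper.
have UF : Filter U by apply: filter_filter.
pose cF (F : seq X) := projT1 (cid (local F)).
have cFP F := projT2 (cid (local F)).
have supp x : U [set F | x \in F] by apply: supU; exists [:: x] => l; apply; apply: mem_head.
have ex x : exists2 i, i < n & U [set F | cF F x = i].
  apply: (ultra_fibre UU); apply: filterS (supp x) => F xF; exact: (proj1 (cFP F)).
pose c x := projT1 (cid2 (ex x)).
have [cn Uc] : (forall x, c x < n) /\ (forall x, U [set F | cF F x = c x]).
  by split => x; case: (projT2 (cid2 (ex x))).
exists c; split => // x x'.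
have : U ([set F | cF F x = c x] `&` [set F | cF F x' = c x']
    `&` [set F | x \in F] `&` [set F | x' \in F]).
  by apply: filterI; [apply: filterI; [apply: filterI|]|].
case/filter_ex => F [[[Fx Fx'] xF] x'F].
by rewrite -Fx -Fx'; apply: (proj2 (cFP F)).
Qed.
End Compactness.

Section Means.
Local Open Scope R_scope.
Variables (M : Type) (m : (M -> R) -> R).
Hypothesis mean_m : is_mean m.

Definition indicator (P : M -> Prop) : M -> R := fun x => if pselect (P x) then 1 else 0.

Lemma indicatorT (P : M -> Prop) x : P x -> indicator P x = 1.
Proof. by rewrite /indicator; case: pselect. Qed.

Lemma indicatorF (P : M -> Prop) x : ~ P x -> indicator P x = 0.
Proof. by rewrite /indicator; case: pselect. Qed.

Lemma Rabs_indicator_le1 P x : Rabs (indicator P x) <= 1.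
Proof. by rewrite /indicator; case: pselect => ?; rewrite ?Rabs_R1 ?Rabs_R0; lra. Qed.

Lemma indicator_bounded P : Defs.bounded (indicator P).
Proof. by exists 1; apply: Rabs_indicator_le1. Qed.

Definition sumf (fs : seq (M -> R)) : M -> R := fun x => foldr (fun f acc => f x + acc) 0 fs.

Definition sumR (l : seq R) : R := foldr Rplus 0 l.

Lemma sumR_cat (l1 l2 : seq R) : sumR (l1 ++ l2) = sumR l1 + sumR l2.
Proof. elim: l1 => [|a l1 IH]; rewrite /= ?IH; lra. Qed.

Lemma mean_indicator_le1 P : m (indicator P) <= 1.
Proof.
have [_ [_ [_ [mN _]]]] := mean_m.
apply: Rle_trans (Rle_abs _) _.
exact/mN/Rabs_indicator_le1.
Qed.

Lemma mean_ext f g : (forall x, f x = g x) -> m f = m g.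
Proof. by move=> fg; congr m; apply: funext. Qed.

Lemma mean_cst0 : m (fun _ => 0) = 0.
Proof.
have [_ [mZ _]] := mean_m.
have b1 : Defs.bounded (fun _ : M => 1) by exists 1 => x; rewrite Rabs_R1; lra.
rewrite -[RHS](Rmult_0_l (m (fun _ => 1))) -mZ //; apply: mean_ext => x; lra.
Qed.

Section IndicatorFamily.
Variables (J : eqType) (P : J -> M -> Prop).

Lemma sumf_indicator_bounded l : Defs.bounded (sumf [seq indicator (P j) | j <- l]).
Proof.
elim: l => [|j l [C hC]]; first by exists 0 => x; rewrite /= Rabs_R0; lra.
have [C1 h1] := indicator_bounded (P j).
exists (C1 + C) => x; apply: Rle_trans (Rabs_triang _ _) _.
exact: Rplus_le_compat (h1 x) (hC x).
Qed.

Lemma mean_sumf_indicator l :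
  m (sumf [seq indicator (P j) | j <- l]) = sumR [seq m (indicator (P j)) | j <- l].
Proof.
elim: l => [|j l IH] /=; first exact: mean_cst0.
have [mD _] := mean_m.
by rewrite -IH -mD //; [apply: indicator_bounded | apply: sumf_indicator_bounded].
Qed.

Lemma sumf_indicator_exclusive (l : seq J) x :
  uniq l -> (forall j j', P j x -> P j' x -> j = j') ->
  sumf [seq indicator (P j) | j <- l] x = indicator (fun y => exists2 j, j \in l & P j y) x.
Proof.
move=> + excl; elim: l => [_|j l IH /andP [jl ul]] /=.
  by rewrite indicatorF //; case.
rewrite IH //; case: (pselect (P j x)) => [Pj|nPj].
  rewrite (indicatorT Pj) [in RHS]indicatorT ?indicatorF; first lra.
  - by move=> [j' j'l /(excl _ _ Pj) jj']; move: jl; rewrite jj' j'l.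
  - by exists j; rewrite ?mem_head.
rewrite indicatorF // Rplus_0_l /indicator.
case: pselect => [[j' j'l Pj']|nl]; case: pselect => // nl'.
  by case: nl'; exists j' => //; rewrite inE j'l orbT.
exfalso; case: nl' => j'' + Pj''.
by rewrite inE => /orP [/eqP jj|j''l]; [case: nPj; rewrite -jj | case: nl; exists j''].
Qed.
End IndicatorFamily.
End Means.

Section InvariantMean.
Local Open Scope R_scope.
Variables (M : eqType) (op : M -> M -> M).
Hypothesis left_cancel : forall s t t', op s t = op s t' -> t = t'.
Variable m : (M -> R) -> R.
Hypothesis mean_m : is_mean m.
Hypothesis m_invariant : forall s f, Defs.bounded f -> m (fun x => f (op s x)) = m f.

Lemma mean_indicator_translate s (P : M -> Prop) :
  m (indicator (fun y => exists2 x, P x & y = op s x)) = m (indicator P).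
Proof.
rewrite -(m_invariant s (indicator_bounded _)); apply: mean_ext => x.
rewrite /indicator; case: pselect => [[x' Px' eqx]|nP]; case: pselect => // Px; exfalso.
- by apply: Px; rewrite (left_cancel eqx).
- by apply: nP; exists x.
Qed.

(* Two injective [S]-translations of [M] with disjoint images would give [M] mean 2. *)
Lemma no_paradoxical_colouring (S : seq M) (c : bool -> M -> M) :
  (forall b x, c b x \in S) ->
  (forall b x b' x', op (c b x) x = op (c b' x') x' -> b = b' /\ x = x') ->
  False.
Proof.
move=> cS c_inj.
pose fibre (p : bool * M) x := c p.1 x = p.2.
pose piece (p : bool * M) y := exists2 x, fibre p x & y = op p.2 x.
pose half (b : bool) := [seq (b, s) | s <- undup S].
have fibres_mass b : sumR [seq m (indicator (fibre p)) | p <- half b] = 1.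
  have [_ [_ [_ [_ m1]]]] := mean_m.
  rewrite -map_comp -(mean_sumf_indicator mean_m (fun s => fibre (b, s))) -m1.
  apply: mean_ext => x; rewrite sumf_indicator_exclusive ?undup_uniq //.
    by rewrite indicatorT //; exists (c b x); rewrite ?mem_undup.
  by rewrite /fibre /= => s s' <- <-.
have pieces_mass : sumR [seq m (indicator (piece p)) | p <- half true ++ half false] = 2.
  rewrite (eq_map (fun p => mean_indicator_translate p.2 (fibre p))).
  by rewrite map_cat sumR_cat !fibres_mass; lra.
have : sumR [seq m (indicator (piece p)) | p <- half true ++ half false] <= 1.
  rewrite -mean_sumf_indicator //; apply: Rle_trans (mean_indicator_le1 mean_m _).
  right; apply: mean_ext => y; apply: sumf_indicator_exclusive.
    rewrite cat_uniq !map_inj_uniq ?undup_uniq //=; try by move=> ? ? [].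
    by rewrite andbT; apply/hasPn => _ /mapP [s _ ->]; apply/mapP => -[? _].
  move=> [b s] [b' s'] [x cx ->] [x' cx'] /esym; rewrite /fibre /= in cx cx'.
  by rewrite -cx -cx' => /c_inj [-> ->].
by rewrite pieces_mass; lra.
Qed.
End InvariantMean.

Section FolnerSets.
Local Open Scope R_scope.
Variables (T : eqType) (op : T -> T -> T).

Definition folner_set (K : seq T) (d : R) (F : seq T) :=
  [/\ uniq F, (0 < size F)%N &
      forall k, k \in K -> INR (count (fun y => op k y \notin F) F) <= d * INR (size F)].

Definition folner_condition :=
  forall (K : seq T) (d : R), 0 < d -> exists F, folner_set K d F.
End FolnerSets.

Section Expansion.
Local Open Scope R_scope.
Variables (T : eqType) (op : T -> T -> T) (e : T).

Hypothesis op_monoid : is_monoid op e.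
Hypothesis left_cancel : forall s t t', op s t = op s t' -> t = t'.

Definition mulseq (S P : seq T) : seq T := [seq op s x | s <- S, x <- P].

Definition card_mul (S P : seq T) : nat := size (undup (mulseq S P)).

Lemma card_mul_ge (S P : seq T) : e \in S -> uniq P -> (size P <= card_mul S P)%N.
Proof.
move=> eS uP; apply: uniq_leq_size => // x xP.
by have [_ [unit_l _]] := op_monoid; rewrite mem_undup -(unit_l x) allpairs_f.
Qed.

Lemma card_mul_mulseq (S S' P : seq T) :
  card_mul (mulseq S S') P = card_mul S (undup (mulseq S' P)).
Proof.
have [mulA _] := op_monoid.
apply/eqP; rewrite eqn_leq; apply/andP; split; apply: uniq_leq_size; rewrite ?undup_uniq //.
  move=> z; rewrite !mem_undup => /allpairsP [[st x] /= [+ xP ->]].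
  move=> /allpairsP [[s t] /= [sS tS ->]].
  by rewrite -mulA allpairs_f // mem_undup allpairs_f.
move=> z; rewrite !mem_undup => /allpairsP [[s tx] /= [sS]].
rewrite mem_undup => /allpairsP [[t x] /= [tS xP ->]] ->.
by rewrite mulA allpairs_f // allpairs_f.
Qed.

Variables (K : seq T) (d : R).
Hypothesis d_gt0 : 0 < d.
Hypothesis no_folner : forall F, ~ folner_set op K d F.

Lemma card_mul_expand P : uniq P -> (1 + d) * INR (size P) <= INR (card_mul (e :: K) P).
Proof.
move=> uP; have [/size0nil ->|P0] := posnP (size P).
  by rewrite /= Rmult_0_r; apply: pos_INR.
have [k kK escape] : exists2 k, k \in K &
    d * INR (size P) < INR (count (fun y => op k y \notin P) P).
  apply: contrapT => nk; apply: (no_folner (F := P)); split => // k kK.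
  by apply: Rnot_lt_le => lt; apply: nk; exists k.
pose L := P ++ [seq op k y | y <- P & op k y \notin P].
have uL : uniq L.
  rewrite cat_uniq uP map_inj_uniq ?filter_uniq //=; last exact: left_cancel.
  by rewrite andbT; apply/hasPn => z /mapP [y]; rewrite mem_filter => /andP [nP _] ->.
have sL : {subset L <= undup (mulseq (e :: K) P)}.
  move=> z; rewrite mem_undup mem_cat => /orP [zP|/mapP [y]].
    by have [_ [unit_l _]] := op_monoid; rewrite -(unit_l z) allpairs_f ?mem_head.
  by rewrite mem_filter => /andP [_ yP] ->; rewrite allpairs_f // inE kK orbT.
have := uniq_leq_size uL sL; rewrite size_cat size_map size_filter => /leP /le_INR.
by rewrite plus_INR /card_mul; lra.
Qed.

Fixpoint powseq n : seq T := if n is n'.+1 then mulseq (e :: K) (powseq n') else [:: e].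

Lemma card_mul_powseq n P : uniq P -> (1 + d) ^ n * INR (size P) <= INR (card_mul (powseq n) P).
Proof.
move=> uP; elim: n => [|n IH].
  by rewrite Rmult_1_l; apply/le_INR/leP/card_mul_ge; rewrite ?mem_head.
rewrite /= card_mul_mulseq Rmult_assoc; apply: Rle_trans (card_mul_expand (undup_uniq _)).
by apply: Rmult_le_compat_l; [lra | exact: IH].
Qed.

Lemma exists_doubling_seq : exists S, forall P, uniq P -> (2 * size P <= card_mul S P)%N.
Proof.
have [n big] := @Pow_x_infinity (1 + d) ltac:(rewrite Rabs_right; lra) 2.
have two_le : 2 <= (1 + d) ^ n.
  have := big n (le_n n); rewrite Rabs_right; first lra.
  by apply: Rle_ge; apply: pow_le; lra.
exists (powseq n) => P uP; apply/leP/INR_le; rewrite mult_INR.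
apply: Rle_trans (card_mul_powseq n uP); apply: Rmult_le_compat_r; first exact: pos_INR.
by rewrite /=; lra.
Qed.
End Expansion.

Section FolnerOfAmenable.
Variables (T : eqType) (op : T -> T -> T) (e : T).
Hypothesis op_monoid : is_monoid op e.
Hypothesis left_cancel : forall s t t', op s t = op s t' -> t = t'.

Section Doubling.
Variable S : seq T.
Hypothesis doubling : forall P, uniq P -> 2 * size P <= card_mul op S P.

Let translates (p : T * bool) : seq T := [seq op s p.1 | s <- S].

(* Each point of [P] carries two marked copies, and [S P] is large enough to serve both. *)
Lemma doubling_hall_condition l : hall_condition translates l.
Proof.
move=> A uA _; pose P := undup (map fst A).
have sizeA : size A <= 2 * size P.
  have := uniq_leq_size (s2 := [seq (x, b) | x <- P, b <- [:: true; false]]) uA.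
  rewrite size_allpairs /= muln2 -addnn mul2n -addnn; apply => -[x b] pA.
  apply/flatten_mapP; exists x; first by rewrite mem_undup; apply/mapP; exists (x, b).
  by case: b {pA}; rewrite !inE eqxx ?orbT.
have sizeSP : card_mul op S P <= size (nbhd translates A).
  apply: uniq_leq_size; first exact: undup_uniq.
  move=> z; rewrite mem_undup => /allpairsP [[s x] /= [sS xP ->]].
  move: xP; rewrite mem_undup => /mapP [p pA ->].
  by rewrite mem_nbhd; apply/hasP; exists p => //; apply: (map_f (fun s => op s p.1)).
exact: leq_trans sizeA (leq_trans (doubling (undup_uniq _)) sizeSP).
Qed.

Lemma local_paradoxical_colouring (F : seq (T * bool)) :
  exists c : T * bool -> nat, (forall p, p \in F -> c p < size S) /\
    (forall p p', p \in F -> p' \in F -> p <> p' ->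
       op (nth e S (c p)) p.1 <> op (nth e S (c p')) p'.1).
Proof.
have [f [f_inj f_nb]] := hall_marriage e (undup_uniq F) (@doubling_hall_condition _).
have f_nbF p : p \in F -> f p \in translates p by move=> pF; apply: f_nb; rewrite mem_undup.
exists (fun p => index (f p) (translates p)).
have colourK p : p \in F -> op (nth e S (index (f p) (translates p))) p.1 = f p.
  move=> pF; have := nth_index (op e p.1) (f_nbF p pF).
  by rewrite (nth_map e) // -(size_map (fun s => op s p.1)) index_mem f_nbF.
split => [p pF | p p' pF p'F neq].
  by rewrite -(size_map (fun s => op s p.1)) index_mem f_nbF.
by rewrite !colourK // => /f_inj; rewrite !mem_undup => /(_ pF p'F).
Qed.

Lemma exists_paradoxical_colouring : exists c : bool -> T -> T,
  (forall b x, c b x \in S) /\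
  (forall b x b' x', op (c b x) x = op (c b' x') x' -> b = b' /\ x = x').
Proof.
have [col [col_lt col_inj]] := colouring_compactness
  (C := fun p p' i j => p <> p' -> op (nth e S i) p.1 <> op (nth e S j) p'.1)
  local_paradoxical_colouring.
exists (fun b x => nth e S (col (x, b))); split => [b x | b x b' x' eq_op].
  exact/mem_nth/col_lt.
have [[-> ->] // | neq] := eqVneq (x, b) (x', b').
by case: (col_inj (x, b) (x', b') (elimN eqP neq)).
Qed.
End Doubling.

Variable m : (T -> R) -> R.
Hypothesis mean_m : is_mean m.
Hypothesis m_invariant : forall s f, Defs.bounded f -> m (fun x => f (op s x)) = m f.

Theorem folner_of_left_invariant_mean : folner_condition op.
Proof.
move=> K d d_gt0; apply: contrapT => no_folner.
have [S doubling] := exists_doubling_seq op_monoid left_cancel d_gt0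
  (fun F FF => no_folner (ex_intro _ F FF)).
have [c [cS c_inj]] := exists_paradoxical_colouring doubling.
exact: (no_paradoxical_colouring left_cancel mean_m m_invariant cS c_inj).
Qed.
End FolnerOfAmenable.

Lemma In_mem (T : eqType) (x : T) (s : seq T) : List.In x s -> x \in s.
Proof. by elim: s => //= y s IH [->|/IH xs]; rewrite inE ?eqxx ?xs ?orbT. Qed.

Lemma count_predU_le (T : Type) (a b : pred T) (s : seq T) :
  count (predU a b) s <= count a s + count b s.
Proof. by rewrite -count_predUI leq_addr. Qed.

Section FiniteModel.
Local Open Scope R_scope.
Variables (T : choiceType) (F : seq T).
Hypotheses (uF : uniq F) (F_gt0 : (0 < size F)%N).

Lemma card_seq_sub_pred (P : pred T) : #|[pred x : seq_sub F | P (val x)]| = count P F.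
Proof.
rewrite -[in RHS](val_seq_sub_enum uF) count_map.
by rewrite cardE /enum_mem size_filter unlock.
Qed.

Lemma hamming_le_count (f g : seq_sub F -> seq_sub F) (B : pred T) :
  (forall x, f x != g x -> B (val x)) -> hamming f g <= INR (count B F) / INR (size F).
Proof.
move=> fgB; rewrite /hamming card_seq_sub //; apply: Rmult_le_compat_r.
  by apply/Rlt_le/Rinv_0_lt_compat/lt_0_INR/ltP.
apply/le_INR/leP; rewrite -card_seq_sub_pred; apply: subset_leq_card.
by apply/fintype.subsetP => x; rewrite !inE; apply: fgB.
Qed.

Lemma hamming_ge_count (f g : seq_sub F -> seq_sub F) (A : pred T) :
  (forall x, A (val x) -> f x != g x) -> INR (count A F) / INR (size F) <= hamming f g.
Proof.
move=> Afg; rewrite /hamming card_seq_sub //; apply: Rmult_le_compat_r.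
  by apply/Rlt_le/Rinv_0_lt_compat/lt_0_INR/ltP.
apply/le_INR/leP; rewrite -card_seq_sub_pred; apply: subset_leq_card.
by apply/fintype.subsetP => x; rewrite !inE; apply: Afg.
Qed.

Variables (op : T -> T -> T) (e : T) (K : seq T) (eps : R).
Hypothesis eps_gt0 : 0 < eps.

(* [act k] is the action of [k] on [F], trusted only at the points where [good k] holds. *)
Variables (act : T -> T -> T) (good : T -> T -> bool).
Hypothesis act_F : forall k x, x \in F -> act k x \in F.
Hypothesis few_bad : forall k, k \in e :: K ++ [seq op k1 k2 | k1 <- K, k2 <- K] ->
  INR (count (predC (good k)) F) <= eps / 2 * INR (size F).
Hypothesis act_unit : forall x, x \in F -> good e x -> act e x = x.
Hypothesis act_inj : forall k1 k2 x, x \in F -> k1 <> k2 -> good k1 x -> good k2 x ->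
  act k1 x <> act k2 x.
Hypothesis act_mul : forall k1 k2 x, x \in F -> good k2 x -> good (op k1 k2) x ->
  act (op k1 k2) x = act k1 (act k2 x).

Let phi k (x : seq_sub F) : seq_sub F := insubd x (act k (val x)).

Let val_phi k x : val (phi k x) = act k (val x).
Proof. by rewrite insubdK //; apply/act_F/valP. Qed.

Let few_bad_K k : k \in K -> INR (count (predC (good k)) F) <= eps / 2 * INR (size F).
Proof. by move=> kK; apply: few_bad; rewrite inE mem_cat kK orbT. Qed.

Let size_F_gt0 : 0 < INR (size F).
Proof. exact/lt_0_INR/ltP. Qed.

Lemma almost_action_injective : is_K_alpha_injective K (1 - eps) phi.
Proof.
move=> k1 k2 /In_mem k1K /In_mem k2K k12.
apply: Rle_trans (hamming_ge_count (A := predI (good k1) (good k2)) _).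
  apply: (Rmult_le_reg_r (INR (size F))) => //; rewrite /Rdiv Rmult_assoc Rinv_l; last lra.
  have := count_predC (predI (good k1) (good k2)) F.
  rewrite (eq_count (a1 := predC _) (a2 := predU (predC (good k1)) (predC (good k2)))); last first.
    by move=> x /=; rewrite negb_and.
  move=> /(congr1 INR); rewrite plus_INR.
  move: (count_predU_le (predC (good k1)) (predC (good k2)) F) => /leP/le_INR; rewrite plus_INR.
  by have := few_bad_K k1K; have := few_bad_K k2K; lra.
move=> x /andP [g1 g2]; apply/negP => /eqP /(congr1 val); rewrite !val_phi.
by apply: act_inj => //; apply: valP.
Qed.

Lemma almost_action_morphism : is_K_eps_morphism op e K eps phi.
Proof.
split=> [k1 k2 /In_mem k1K /In_mem k2K | ].
  have k12 : op k1 k2 \in e :: K ++ [seq op k1 k2 | k1 <- K, k2 <- K].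
    by rewrite inE mem_cat allpairs_f ?orbT.
  apply: Rle_trans
    (hamming_le_count (B := predU (predC (good k2)) (predC (good (op k1 k2)))) _) _.
    move=> x; apply: contraR; rewrite negb_or !negbK => /andP [g2 g12].
    by apply/eqP/val_inj; rewrite !val_phi act_mul //; apply: valP.
  apply: (Rmult_le_reg_r (INR (size F))) => //; rewrite /Rdiv Rmult_assoc Rinv_l; last lra.
  move: (count_predU_le (predC (good k2)) (predC (good (op k1 k2))) F) => /leP/le_INR.
  by rewrite plus_INR; have := few_bad_K k2K; have := few_bad k12; lra.
apply: Rle_trans (hamming_le_count (B := predC (good e)) _) _.
  move=> x; apply: contraR => /negbNE ge; apply/eqP/val_inj.
  by rewrite val_phi act_unit //; apply: valP.
apply: (Rmult_le_reg_r (INR (size F))) => //; rewrite /Rdiv Rmult_assoc Rinv_l; last lra.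
by have := few_bad (mem_head _ _); nra.
Qed.

Lemma sofic_witness_of_almost_action : exists X : finType, #|X| != 0%nat /\
  exists phi : T -> X -> X, is_K_alpha_injective K (1 - eps) phi /\
    is_K_eps_morphism op e K eps phi.
Proof.
exists (seq_sub F); split; first by rewrite card_seq_sub // -lt0n.
by exists phi; split; [apply: almost_action_injective | apply: almost_action_morphism].
Qed.
End FiniteModel.

Lemma count_notin_image (T : eqType) (f : T -> T) (F : seq T) : injective f -> uniq F ->
  count (fun x => ~~ has (fun y => f y == x) F) F = count (fun y => f y \notin F) F.
Proof.
move=> f_inj uF.
suff img : count (fun x => has (fun y => f y == x) F) F = count (fun y => f y \in F) F.
  apply/eqP; rewrite -(eqn_add2l (count (fun y => f y \in F) F)) -{1}img.
  by rewrite !count_predC.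
rewrite -!size_filter -(size_map f [seq y <- F | f y \in F]).
apply/perm_size/uniq_perm => [||z]; rewrite ?map_inj_uniq ?filter_uniq //.
rewrite mem_filter; apply/andP/mapP => [[/hasP [y yF /eqP fy] zF] | [y]].
  by exists y; rewrite ?mem_filter ?fy ?zF.
by rewrite mem_filter => /andP [fyF yF] ->; split => //; apply/hasP; exists y.
Qed.

Lemma is_monoid_opposite (T : Type) (op : T -> T -> T) (e : T) :
  is_monoid op e -> is_monoid (fun x y => op y x) e.
Proof. by move=> [mulA [unit_l unit_r]]; split => // a b c; rewrite mulA. Qed.

Section SoficOfFolner.
Local Open Scope R_scope.
Variables (T : choiceType) (op : T -> T -> T) (e : T).
Hypotheses (op_monoid : is_monoid op e) (op_cancel : cancellative op).

Lemma sofic_of_folner : folner_condition op -> sofic op e.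
Proof.
move=> folner K eps eps_gt0; have [mulA [unit_l _]] := op_monoid.
have [F [uF F_gt0 few_escape]] :=
  folner (e :: K ++ [seq op k1 k2 | k1 <- K, k2 <- K]) (eps / 2) ltac:(lra).
apply: (sofic_witness_of_almost_action uF F_gt0 eps_gt0
  (act := fun k x => if op k x \in F then op k x else x) (good := fun k x => op k x \in F)).
- by move=> k x xF; case: ifP.
- exact: few_escape.
- by move=> x xF; rewrite unit_l xF.
- by move=> k1 k2 x _ k12 /= g1 g2; rewrite g1 g2 => /(proj2 op_cancel).
- by move=> k1 k2 x _ /= g2 g12; rewrite g2 mulA g12.
Qed.

Lemma sofic_of_folner_opposite : folner_condition (fun x y => op y x) -> sofic op e.
Proof.
move=> folner K eps eps_gt0.
have [mulA [_ unit_r]] := op_monoid; have [lcancel rcancel] := op_cancel.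
have [F [uF F_gt0 few_escape]] :=
  folner (e :: K ++ [seq op k1 k2 | k1 <- K, k2 <- K]) (eps / 2) ltac:(lra).
pose good k x := has (fun y => op y k == x) F.
pose act k x := nth x F (find (fun y => op y k == x) F).
have act_spec k x : good k x -> act k x \in F /\ op (act k x) k = x.
  by move=> g; split; [apply: mem_nth; rewrite -has_find | apply/eqP/(nth_find x g)].
apply: (sofic_witness_of_almost_action uF F_gt0 eps_gt0 (act := act) (good := good)).
- move=> k x xF; case g: (good k x); first by case: (act_spec k x g).
  by rewrite /act nth_default // leqNgt -has_find; apply: negbT.
- move=> k kK; rewrite [count _ F](count_notin_image (f := fun y => op y k)) //.
    exact: few_escape.
  by move=> y y'; apply: rcancel.
- by move=> x xF /act_spec [_]; rewrite unit_r.
- move=> k1 k2 x _ k12 /act_spec [_ h1] /act_spec [_ h2] eq12; apply: k12.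
  by apply: (lcancel (act k1 x)); rewrite h1 eq12 h2.
- move=> k1 k2 x _ /act_spec [_ hy] /act_spec [zF hz].
  have g1 : good k1 (act k2 x).
    by apply/hasP; exists (act (op k1 k2) x) => //; apply/eqP/(rcancel k2); rewrite hy -mulA.
  have [_ h1] := act_spec _ _ g1.
  by apply: (rcancel k1); rewrite h1; apply: (rcancel k2); rewrite hy -mulA.
Qed.
End SoficOfFolner.

Theorem proposition4p7 (M : Type) (op : M -> M -> M) (e : M) :
  is_monoid op e -> cancellative op ->
  (left_amenable op \/ right_amenable op) ->
  sofic op e.
Proof.
move=> op_monoid op_cancel amenable; pose T : choiceType := {classic M}.
have [lcancel rcancel] := op_cancel.
case: amenable => [[m [mean_m m_inv]] | [m [mean_m m_inv]]].
- apply: (@sofic_of_folner T) => //.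
  exact: (folner_of_left_invariant_mean (T := T) op_monoid lcancel mean_m m_inv).
- apply: (@sofic_of_folner_opposite T) => //.
  exact: (folner_of_left_invariant_mean (T := T)
           (is_monoid_opposite op_monoid) rcancel mean_m m_inv).
Qed.
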